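(* Let $p$ be a prime, $n\ge2$, $1\le k\le n-1$ and $0\le l\le n$. Then \[ \nu_{n,k,l}(p)=G_{k,n}+(p^l-1)G_{k-1,n-1}, \] and moreover \[ \nu_{n,k,l}(p)/\nu_{n,n-k,n-l}(p)=p^{k+l-n}. \]
   Context: For $0\le j\le n$, $\nu_{n,k,j}(p)=\sum_{W\subset\mathbb{F}_p^n,\ \dim W=k}p^{\dim(W\cap U)}$, where $U\subset\mathbb{F}_p^n$ is any fixed $j$-dimensional subspace (the value is independent of $U$). $G_{a,b}$ is the number of $a$-dimensional subspaces of $\mathbb{F}_p^b$, i.e. $G_{a,b}=\frac{[b]!}{[a]![b-a]!}$ with $[m]=(p^m-1)/(p-1)$ and $[m]!=\prod_{i=1}^m[i]$. *)

From HB Require Import structures.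
From mathcomp Require Import all_boot all_order all_algebra.
Unset Printing Implicit Defensive.
Import Order.TTheory GRing.Theory Num.Theory.
Local Open Scope ring_scope.

Definition qint (p m : nat) : rat := (p%:Q ^+ m - 1) / (p%:Q - 1).

Definition qfact (p m : nat) : rat := \prod_(1 <= i < m.+1) qint p i.

Definition gauss (p a b : nat) : rat := qfact p b / (qfact p a * qfact p (b - a)).

(* Subspaces of F_p^n (row vectors) are represented by their canonical
   matrices: W : 'M['F_p]_n with <<W>> = W (mxalgebra), dim W = \rank W.
   nu p n k U = sum over k-dimensional subspaces W of p^(dim (W cap U)). *)
Definition nu (p n k : nat) (U : 'M['F_p]_n) : rat :=
  \sum_(W : 'M['F_p]_n | (<<W>>%MS == W) && (\rank W == k))
     p%:Q ^+ \rank (W :&: U)%MS.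

From HB Require Import structures.
From mathcomp Require Import all_boot all_order all_algebra.
From mathcomp Require Import zify ring.
Set Implicit Arguments.
Unset Strict Implicit.
Unset Printing Implicit Defensive.
Import Order.TTheory GRing.Theory Num.Theory.
Local Open Scope ring_scope.

(* Over a field with q elements, q ^ dim (W :&: U) is the number of vectors of
   W :&: U, so exchanging the two sums shows that nu counts the pairs (v, W)
   with v in U and v in W: the zero vector lies in all G_{k,n} subspaces W, and
   each of the q^l - 1 nonzero vectors of U lies in G_{k-1,n-1} of them.  The
   number of subspaces of dimension dim A + r containing a fixed subspace A
   comes from counting, in two ways, the families of r vectors that are
   linearly independent modulo A: one vector at a time (q^n - q^(dim A + i)
   choices for the i-th one), or by first choosing the subspace they span
   together with A.  Finally the two values of nu in the ratio share the factor
   [n-1]! / ([k]! [n-k]! (q - 1)), and the remaining factors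
   q^n - q^k - q^l + q^(k+l) and its image under (k, l) |-> (n - k, n - l)
   differ by q^(k+l-n). *)

Lemma prod_expnB_shift q a d r :
  (\prod_(i < r) (q ^ (a + d) - q ^ (a + i)) =
   q ^ (a * r) * \prod_(i < r) (q ^ d - q ^ i))%N.
Proof.
rewrite (eq_bigr (fun i : 'I_r => q ^ a * (q ^ d - q ^ i))%N) => [|i _]; last first.
  by rewrite !expnD mulnBr.
by rewrite big_split /= prod_nat_const card_ord expnM.
Qed.

Lemma prod_expnB_gt0 q r : (1 < q)%N -> (0 < \prod_(i < r) (q ^ r - q ^ i))%N.
Proof. by move=> q_gt1; rewrite prodn_gt0 // => i; rewrite subn_gt0 ltn_exp2l. Qed.

Definition nu_formula (q n k l : nat) : rat :=
  gauss q k n + (q%:Q ^+ l - 1) * gauss q (k - 1) (n - 1).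

Lemma expr_complement_swap (R : comPzRingType) (x : R) n k l :
  (k <= n)%N -> (l <= n)%N ->
  (x ^+ n - x ^+ k - x ^+ l + x ^+ (k + l)) * x ^+ n =
  x ^+ (k + l) * (x ^+ n - x ^+ (n - k) - x ^+ (n - l) + x ^+ (n - k + (n - l))).
Proof.
move=> le_kn le_ln; rewrite mulrDl !mulrBl mulrDr !mulrBr -!exprD.
have -> : (k + l + (n - k) = l + n)%N by lia.
have -> : (k + l + (n - l) = k + n)%N by lia.
have -> : (k + l + (n - k + (n - l)) = n + n)%N by lia.
ring.
Qed.

Section QBinomial.

Variable q : nat.
Hypothesis q_gt1 : (1 < q)%N.
Local Notation Q := q%:Q.

Lemma qfact0 : qfact q 0 = 1.
Proof. by rewrite /qfact big_geq. Qed.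

Lemma qfactS m : qfact q m.+1 = qfact q m * qint q m.+1.
Proof. by rewrite /qfact big_nat_recr. Qed.

Lemma ltr1q : 1 < Q.
Proof. by rewrite ltr1n. Qed.

Lemma subq1_neq0 : Q - 1 != 0.
Proof. by rewrite subr_eq0 gt_eqF // ltr1q. Qed.

Lemma exprltr1q m : (0 < m)%N -> 1 < Q ^+ m.
Proof. by move=> m_gt0; rewrite exprn_egt1 -?lt0n ?ltr1q. Qed.

Lemma qint_gt0 m : (0 < m)%N -> 0 < qint q m.
Proof. by move=> m_gt0; rewrite divr_gt0 // subr_gt0 ?exprltr1q ?ltr1q. Qed.

Lemma qfact_gt0 m : 0 < qfact q m.
Proof.
elim: m => [|m IHm]; first by rewrite qfact0.
by rewrite qfactS mulr_gt0 // qint_gt0.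
Qed.

Lemma gauss_gt0 a b : 0 < gauss q a b.
Proof. by rewrite divr_gt0 ?mulr_gt0 ?qfact_gt0. Qed.

Lemma natr_expnB d i : (i <= d)%N ->
  ((q ^ d - q ^ i)%N)%:R = (q ^ i)%:R * (Q - 1) * qint q (d - i).
Proof.
move=> le_id; rewrite natrB ?leq_exp2l // !natrX -{1}(subnKC le_id) exprD /qint.
by field; rewrite subq1_neq0.
Qed.

Lemma natr_prod_expnB d r : (r <= d)%N ->
  ((\prod_(i < r) (q ^ d - q ^ i))%N)%:R =
  (\prod_(i < r) ((q ^ i)%:R * (Q - 1))) * (qfact q d / qfact q (d - r)).
Proof.
elim: r => [|r IHr] lt_rd; first by rewrite !big_ord0 subn0 mulfV ?gt_eqF ?qfact_gt0.
rewrite !big_ord_recr natrM IHr 1?ltnW // natr_expnB 1?ltnW //.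
have -> : (d - r = (d - r.+1).+1)%N by lia.
rewrite qfactS -mulrA -[RHS]mulrA; congr (_ * _).
have := qfact_gt0 (d - r.+1); have := qint_gt0 (ltn0Sn (d - r.+1)).
move=> /gt_eqF qint_neq0 /gt_eqF qfact_neq0; field.
by rewrite qint_neq0 qfact_neq0.
Qed.

Lemma natr_prod_expnB_gauss d r : (r <= d)%N ->
  ((\prod_(i < r) (q ^ d - q ^ i))%N)%:R =
  gauss q r d * ((\prod_(i < r) (q ^ r - q ^ i))%N)%:R.
Proof.
move=> le_rd; rewrite !natr_prod_expnB // subnn qfact0 divr1 /gauss.
have := qfact_gt0 r; have := qfact_gt0 (d - r).
move=> /gt_eqF qfact_neq0 /gt_eqF qfact_r_neq0; field.
by rewrite qfact_neq0 qfact_r_neq0.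
Qed.

Lemma nu_formula_gt0 n k l : 0 < nu_formula q n k l.
Proof.
apply: ltr_wpDr (gauss_gt0 _ _).
by rewrite mulr_ge0 ?subr_ge0 ?exprn_ege1 ?ltW ?gauss_gt0 ?ltr1q.
Qed.

Lemma nu_formulaE n k l : (1 <= k <= n)%N ->
  nu_formula q n k l = qfact q n.-1 / (qfact q k * qfact q (n - k) * (Q - 1)) *
                       (Q ^+ n - Q ^+ k - Q ^+ l + Q ^+ (k + l)).
Proof.
case: k => [//|k]; case: n => [//|n] /= le_kn.
rewrite /nu_formula /gauss !subn1 /= subSS !qfactS /qint exprD.
have qk_neq0 : Q ^+ k.+1 - 1 != 0 by rewrite subr_eq0 gt_eqF ?exprltr1q.
have := qfact_gt0 k; have := qfact_gt0 (n - k).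
move=> /gt_eqF qfact_nk_neq0 /gt_eqF qfact_k_neq0.
field; rewrite qk_neq0 qfact_nk_neq0 qfact_k_neq0 andbT.
exact: subq1_neq0.
Qed.

Lemma nu_formula_ratio n k l : (1 <= k < n)%N -> (l <= n)%N ->
  nu_formula q n k l / nu_formula q n (n - k) (n - l) = Q ^ (k%:Z + l%:Z - n%:Z).
Proof.
move=> /andP [k_gt0 lt_kn] le_ln.
have k_range : (1 <= k <= n)%N by rewrite k_gt0 ltnW.
have nk_range : (1 <= n - k <= n)%N by rewrite subn_gt0 lt_kn leq_subr.
have nnk : (n - (n - k) = k)%N by rewrite subKn // ltnW.
have := nu_formula_gt0 n (n - k) (n - l) => /lt0r_neq0.
rewrite (nu_formulaE l k_range) (nu_formulaE (n - l) nk_range) nnk => nu'_neq0.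
have Q_neq0 : Q != 0 by rewrite lt0r_neq0 // (lt_trans ltr01 ltr1q).
rewrite -PoszD expfzDr // -exprnN -!exprnP.
apply/eqP; rewrite eqr_div ?expf_neq0 //; apply/eqP.
rewrite [qfact q (n - k) * _]mulrC -[LHS]mulrA [RHS]mulrCA.
by rewrite expr_complement_swap // ltnW.
Qed.

End QBinomial.

Lemma card_col_mx (T : finType) m1 m2 n (P : pred 'M[T]_(m1 + m2, n)) :
  #|[set M | P M]| =
  \sum_(A : 'M[T]_(m1, n)) #|[set B : 'M[T]_(m2, n) | P (col_mx A B)]|.
Proof.
rewrite -sum1dep_card (reindex (fun x => col_mx x.1 x.2)) /=; last first.
  exists (fun M => (usubmx M, dsubmx M)) => [[A B] _ | M _] /=.
    by rewrite col_mxKu col_mxKd.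
  by rewrite vsubmxK.
rewrite -(pair_big_dep xpredT (fun A B => P (col_mx A B)) (fun _ _ => 1%N)) /=.
by apply: eq_bigr => A _; rewrite sum1dep_card.
Qed.

Definition row_free_over {F : fieldType} {m n r}
    (A : 'M[F]_(m, n)) (M : 'M[F]_(r, n)) :=
  \rank (A + M)%MS == (\rank A + r)%N.

Section RowFreeOver.

Context {F : fieldType} {n : nat}.

Lemma mxrank_adds_rV m (A : 'M[F]_(m, n)) (u : 'rV[F]_n) :
  \rank (A + u)%MS = (\rank A + ~~ (u <= A)%MS)%N.
Proof.
have [le_rA eq_rA] := mxrank_leqif_sup (addsmxSl A u).
rewrite addsmx_sub submx_refl /= in eq_rA.
have [le_rAu _] := mxrank_adds_leqif A u.
have le_ru := rank_leq_row u.
by case: (u <= A)%MS eq_rA => /eqP eq_rA /=; lia.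
Qed.

Lemma row_free_over_col_mx m r (A : 'M[F]_(m, n)) (u : 'rV[F]_n) (M : 'M[F]_(r, n)) :
  row_free_over A (col_mx u M) = ~~ (u <= A)%MS && row_free_over (A + u)%MS M.
Proof.
rewrite /row_free_over -(adds_eqmx (eqmx_refl A) (addsmxE u M)) addsmxA.
have [le_rAuM _] := mxrank_adds_leqif (A + u)%MS M.
have le_rM := rank_leq_row M.
rewrite mxrank_adds_rV in le_rAuM *.
by case: (u <= A)%MS le_rAuM => /= le_rAuM; apply/eqP/eqP; lia.
Qed.

Lemma row_free_over_genmx m r (A : 'M[F]_(m, n)) (M : 'M[F]_(r, n)) (W : 'M[F]_n) :
  row_free_over A M -> <<W>>%MS = W -> \rank W = (\rank A + r)%N -> (A <= W)%MS ->
  (<<(A + M)%MS>>%MS == W) = (M <= W)%MS.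
Proof.
move=> /eqP rank_AM genW rankW sAW; apply/eqP/idP => [<- | sMW].
  by rewrite genmxE addsmxSr.
have sAMW : (A + M <= W)%MS by rewrite addsmx_sub sAW.
rewrite -genW; apply/eq_genmx/eqmxP.
by rewrite -(mxrank_leqif_eq sAMW) rank_AM rankW.
Qed.

End RowFreeOver.

Section Grassmannian.

Variables (F : finFieldType) (n : nat).
Local Notation q := #|F|.

Definition grassmannian k : {set 'M[F]_n} :=
  [set W | (<<W>>%MS == W) && (\rank W == k)].

Lemma card_rV_submx m (S : 'M[F]_(m, n)) :
  #|[set v : 'rV[F]_n | (v <= S)%MS]| = (q ^ \rank S)%N.
Proof.
have -> : [set v : 'rV[F]_n | (v <= S)%MS] =
          [set x *m row_base S | x in [set: 'rV_(\rank S)]].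
  apply/setP => v; rewrite inE -(eq_row_base S).
  apply/idP/imsetP => [/submxP [x ->] | [x _ ->]].
    by exists x; rewrite ?inE.
  exact: submxMl.
by rewrite card_imset ?cardsT ?card_mx ?mul1n //; apply: row_free_inj (row_base_free S).
Qed.

Lemma card_row_free_over_sub r m s (A : 'M[F]_(m, n)) (S : 'M[F]_(s, n)) :
  (A <= S)%MS ->
  #|[set M : 'M[F]_(r, n) | (M <= S)%MS && row_free_over A M]| =
  (\prod_(i < r) (q ^ \rank S - q ^ (\rank A + i)))%N.
Proof.
elim: r m A => [|r IHr] m A sAS.
  rewrite big_ord0 (eq_card (B := [set: 'M[F]_(0, n)])) ?cardsT ?card_mx // => M.
  by rewrite !inE flatmx0 sub0mx /row_free_over addsmx0 addn0 eqxx.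
have card_new : #|[set u : 'rV[F]_n | (u <= S)%MS && ~~ (u <= A)%MS]| =
                (q ^ \rank S - q ^ \rank A)%N.
  rewrite -!card_rV_submx -cardsDS; last first.
    by apply/subsetP => u; rewrite !inE => /submx_trans->.
  by apply: eq_card => u; rewrite !inE andbC.
rewrite (@card_col_mx _ 1 r) big_ord_recl addn0 -card_new -sum_nat_cond_const /=.
rewrite [RHS]big_mkcond /=; apply: eq_bigr => u _.
case: ifPn => [/andP [sUS nsUA] | /negbTE bad_u]; last first.
  apply/eqP; rewrite cards_eq0; apply/eqP/setP => M; rewrite !inE.
  by rewrite (col_mx_sub u M) row_free_over_col_mx andbACA bad_u.
have sAuS : (A + u <= S)%MS by rewrite addsmx_sub sAS.
rewrite -(eq_card (A := [set M | (M <= S)%MS && row_free_over (A + u)%MS M])) => [|M].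
  rewrite (IHr _ _ sAuS) mxrank_adds_rV nsUA.
  by apply: eq_bigr => i _; rewrite addnA.
by rewrite !inE (col_mx_sub u M) row_free_over_col_mx sUS nsUA.
Qed.

Lemma card_row_free_over m r (A : 'M[F]_(m, n)) :
  #|[set M : 'M[F]_(r, n) | row_free_over A M]| =
  (#|[set W in grassmannian (\rank A + r)%N | (A <= W)%MS]| *
   \prod_(i < r) (q ^ (\rank A + r) - q ^ (\rank A + i)))%N.
Proof.
rewrite -[LHS]sum1dep_card (partition_big (fun M => <<(A + M)%MS>>%MS)
  (mem [set W in grassmannian (\rank A + r)%N | (A <= W)%MS])) -?sum_nat_const /=.
  apply: eq_bigr => W; rewrite !inE => /andP [/andP [/eqP genW /eqP rankW] sAW].
  rewrite sum1dep_card -rankW -(card_row_free_over_sub r sAW).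
  apply: eq_card => M; rewrite !inE.
  case rfo: (row_free_over A M); rewrite ?andbF // andbT.
  by rewrite (row_free_over_genmx rfo genW rankW sAW).
move=> M rfo; rewrite !inE genmx_id eqxx mxrank_gen (eqP rfo) eqxx.
by rewrite genmxE addsmxSl.
Qed.

Lemma card_grassmannian_sup m r (A : 'M[F]_(m, n)) :
  (#|[set W in grassmannian (\rank A + r)%N | (A <= W)%MS]| *
   \prod_(i < r) (q ^ (\rank A + r) - q ^ (\rank A + i)) =
   \prod_(i < r) (q ^ n - q ^ (\rank A + i)))%N.
Proof.
rewrite -card_row_free_over.
have := card_row_free_over_sub r (submx1 A); rewrite mxrank1 => <-.
by apply: eq_card => M; rewrite !inE submx1.
Qed.

Lemma card_grassmannian_sup_gauss m r (A : 'M[F]_(m, n)) :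
  (r <= n - \rank A)%N ->
  #|[set W in grassmannian (\rank A + r)%N | (A <= W)%MS]|%:R = gauss q r (n - \rank A).
Proof.
move=> le_r_codim; have q_gt1 := card_finNzRing_gt1 F.
have := card_grassmannian_sup r A.
have -> : (q ^ n = q ^ (\rank A + (n - \rank A)))%N by rewrite subnKC ?rank_leq_col.
rewrite !prod_expnB_shift.
move/(congr1 (fun x : nat => x%:R : rat)).
rewrite !natrM (natr_prod_expnB_gauss q_gt1 le_r_codim) mulrCA.
have q_pow_neq0 : (q ^ (\rank A * r))%:R != 0 :> rat.
  by rewrite pnatr_eq0 expn_eq0 negb_and -lt0n (ltnW q_gt1).
have prod_neq0 : (\prod_(i < r) (q ^ r - q ^ i))%:R != 0 :> rat.
  by rewrite pnatr_eq0 -lt0n prod_expnB_gt0.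
by move/(mulfI q_pow_neq0)/(mulIf prod_neq0).
Qed.

Lemma sum_card_rV_capmx (Ws : {set 'M[F]_n}) m (U : 'M[F]_(m, n)) :
  (\sum_(W in Ws) #|[set v : 'rV[F]_n | (v <= W :&: U)%MS]| =
   \sum_(v : 'rV[F]_n | (v <= U)%MS) #|[set W in Ws | (v <= W)%MS]|)%N.
Proof.
under eq_bigr => W _ do rewrite -sum1dep_card.
rewrite (exchange_big_dep (fun v => (v <= U)%MS)) => [|W v _]; last first.
  by rewrite sub_capmx => /andP [].
apply: eq_bigr => v sUv; rewrite sum1dep_card.
by apply: eq_card => W; rewrite !inE sub_capmx sUv andbT.
Qed.

Lemma sum_expr_rank_capmx k (U : 'M[F]_n) : (1 <= k <= n)%N ->
  \sum_(W in grassmannian k) q%:Q ^+ \rank (W :&: U)%MS = nu_formula q n k (\rank U).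
Proof.
case/andP => k_gt0 le_kn.
have card_sup0 : #|[set W in grassmannian k | ((0 : 'rV_n) <= W)%MS]|%:R = gauss q k n.
  have := card_grassmannian_sup_gauss (r := k) (A := (0 : 'rV[F]_n)).
  by rewrite mxrank0 add0n subn0; apply.
have card_sup_rV (v : 'rV[F]_n) : v != 0 ->
    #|[set W in grassmannian k | (v <= W)%MS]|%:R = gauss q (k - 1) (n - 1).
  move=> v_neq0; have := card_grassmannian_sup_gauss (r := k - 1) (A := v).
  rewrite rank_rV v_neq0 (_ : (true + (k - 1) = k)%N); last by lia.
  by apply; rewrite leq_sub2r.
under eq_bigr => W _ do rewrite -natrX -card_rV_submx.
rewrite -natr_sum sum_card_rV_capmx (bigD1 0) ?sub0mx //= natrD card_sup0.
rewrite natr_sum (eq_bigr (fun _ => gauss q (k - 1) (n - 1))); last first.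
  by move=> v /andP [_]; apply: card_sup_rV.
rewrite sumr_const -mulr_natl /nu_formula; congr (_ + _ * _).
have card_nonzero :
    #|[set v : 'rV[F]_n | (v <= U)%MS && (v != 0)]| = (q ^ \rank U).-1.
  rewrite -card_rV_submx [in RHS](cardsD1 0) inE sub0mx /=.
  by apply: eq_card => v; rewrite !inE andbC.
rewrite (eq_card (B := [set v : 'rV[F]_n | (v <= U)%MS && (v != 0)])) => [|v].
  by rewrite card_nonzero -subn1 natrB ?natrX // expn_gt0 (ltnW (card_finNzRing_gt1 F)).
by rewrite inE.
Qed.

End Grassmannian.

Lemma nuE p n k (U : 'M['F_p]_n) : prime p -> (1 <= k <= n)%N ->
  nu p n k U = nu_formula p n k (\rank U).
Proof.
move=> p_pr k_range; have := sum_expr_rank_capmx U k_range.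
rewrite card_Fp // => <-.
by apply: eq_bigl => W; rewrite inE.
Qed.

Unset Implicit Arguments.

Theorem lemma3p2 (p n k l : nat) :
  prime p -> (2 <= n)%N -> (1 <= k <= n - 1)%N -> (l <= n)%N ->
  forall U : 'M['F_p]_n, \rank U = l ->
    nu p n k U = gauss p k n + (p%:Q ^+ l - 1) * gauss p (k - 1) (n - 1)
    /\ (forall U' : 'M['F_p]_n, \rank U' = (n - l)%N ->
          nu p n k U / nu p n (n - k) U' = p%:Q ^ (k%:Z + l%:Z - n%:Z)).
Proof.
move=> p_pr n_ge2 /andP [k_gt0 le_k_n1] le_ln U rankU.
have k_bounds : (1 <= k < n)%N by rewrite k_gt0; lia.
have k_range : (1 <= k <= n)%N by rewrite k_gt0; lia.
have nk_range : (1 <= n - k <= n)%N by rewrite leq_subr; lia.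
split; first by rewrite (nuE U p_pr k_range) rankU.
move=> U' rankU'; rewrite (nuE U p_pr k_range) (nuE U' p_pr nk_range) rankU rankU'.
exact: (nu_formula_ratio (prime_gt1 p_pr) k_bounds le_ln).
Qed.
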